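(* Let $(G,s,t)$ be an oriented serial superedge whose principal subgraphs are $(G_1,s_1,t_1),\dots,(G_k,s_k,t_k)$, where $s=s_1$, $t_i=s_{i+1}$ for $1\le i\le k$, and $s_{k+1}=t$, and suppose each $G_i$ is non-serial. Then $\mathrm{Aut}_{\mathrm{or}}(G,s,t)\cong\prod_{i=1}^k\mathrm{Aut}_{\mathrm{or}}(G_i,s_i,t_i)$.
   Context: All graphs are finite, simple and undirected. An oriented series-parallel graph is a triple $(G,s,t)$ where $G$ is a graph and $s\neq t$ are vertices, defined recursively: (i) $G$ is a single edge with vertex set $\{s,t\}$; or (ii) (serial superedge) there are $k\ge 2$ oriented series-parallel graphs $(G_1,s_1,t_1),\dots,(G_k,s_k,t_k)$ with $s_1=s$, $t_k=t$, $t_i=s_{i+1}$ for $1\le i<k$, $V(G_i)\cap V(G_{i+1})=\{s_{i+1}\}$, $V(G_i)\cap V(G_j)=\emptyset$ for $|i-j|\ge2$, and $G=G_1\cup\dots\cup G_k$; or (iii) (parallel superedge) there are $k\ge2$ oriented series-parallel graphs $(G_1,s,t),\dots,(G_k,s,t)$ with $V(G_i)\cap V(G_j)=\{s,t\}$ for $i\neq j$ and $G=G_1\cup\dots\cup G_k$. The $G_i$ are the principal subgraphs. A graph is non-serial if it is not a serial superedge. For an oriented series-parallel graph $(H,u,v)$, $\mathrm{Aut}_{\mathrm{or}}(H,u,v)$ is the group of automorphisms of $H$ fixing both $u$ and $v$. *)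

From mathcomp Require Import all_boot all_fingroup.
Set Implicit Arguments. Unset Strict Implicit. Unset Printing Implicit Defensive.

Section SPGraphs.
Variable V : finType.

(* A (finite simple) graph inside the universe V: a vertex set and a set of
   edges, each edge being a 2-element set of vertices. *)
Definition graph := ({set V} * {set {set V}})%type.
Definition verts (G : graph) : {set V} := G.1.
Definition edges (G : graph) : {set {set V}} := G.2.

Definition single_edge (s t : V) : graph := ([set s; t], [set [set s; t]]).

Definition big_union (k : nat) (Gs : nat -> graph) : graph :=
  (\bigcup_(i < k) verts (Gs i), \bigcup_(i < k) edges (Gs i)).

(* Structural conditions of a serial superedge (ii), with principal subgraphs
   (Gs i, ss i, ss i.+1) for i < k; thus s_i = ss i, t_i = ss i.+1. *)
Definition serial_cond (G : graph) (s t : V) (k : nat) (Gs : nat -> graph)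
    (ss : nat -> V) : Prop :=
  [/\ 2 <= k, ss 0 = s /\ ss k = t,
      (forall i, i.+1 < k -> verts (Gs i) :&: verts (Gs i.+1) = [set ss i.+1]),
      (forall i j, j < k -> i.+2 <= j -> verts (Gs i) :&: verts (Gs j) = set0)
    & G = big_union k Gs].

Definition parallel_cond (G : graph) (s t : V) (k : nat) (Gs : nat -> graph)
  : Prop :=
  [/\ 2 <= k,
      (forall i j, i < k -> j < k -> i <> j ->
          verts (Gs i) :&: verts (Gs j) = [set s; t])
    & G = big_union k Gs].

Inductive osp : graph -> V -> V -> Prop :=
| osp_edge s t : s != t -> osp (single_edge s t) s t
| osp_serial G s t k Gs ss : s != t ->
    (forall i, i < k -> osp (Gs i) (ss i) (ss i.+1)) ->
    serial_cond G s t k Gs ss -> osp G s t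
| osp_parallel G s t k Gs : s != t ->
    (forall i, i < k -> osp (Gs i) s t) ->
    parallel_cond G s t k Gs -> osp G s t.

Definition is_serial (G : graph) (s t : V) : Prop :=
  s != t /\
  exists k Gs ss, (forall i, i < k -> osp (Gs i) (ss i) (ss i.+1)) /\
                  serial_cond G s t k Gs ss.

(* Automorphisms of a graph H, represented as permutations of V supported on
   V(H) (i.e. extended by the identity outside V(H)). *)
Definition is_aut (H : graph) (f : {perm V}) : bool :=
  perm_on (verts H) f &&
  [forall e : {set V}, (f @: e \in edges H) == (e \in edges H)].

Definition Aut_or (H : graph) (u v : V) : {set {perm V}} :=
  [set f : {perm V} | is_aut H f && (f u == u) && (f v == v)].

Definition iso_to_prod (A : {set {perm V}}) (k : nat)
    (B : 'I_k -> {set {perm V}}) : Prop :=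
  exists phi : {perm V} -> {ffun 'I_k -> {perm V}},
    [/\ {in A &, forall f g, phi (f * g)%g = [ffun i => (phi f i * phi g i)%g]},
        {in A &, injective phi},
        (forall f, f \in A -> forall i, phi f i \in B i)
      & (forall h : {ffun 'I_k -> {perm V}}, (forall i, h i \in B i) ->
           exists2 f, f \in A & phi f = h)].

End SPGraphs.

(* Say that [u] separates [w] if deleting [u] disconnects [w] from [s], and
   call the number of separators of [w] its depth; both are invariant under
   automorphisms fixing [s].  Each cut vertex [ss j] separates everything
   beyond it, and since the blocks are non-serial, deleting an inner vertex
   of a block leaves its terminals connected.  Hence the separators of a
   vertex of block [m] other than [ss m] are exactly [ss 1], ..., [ss m], so
   an automorphism fixing [s] and [t] fixes every [ss j] and maps every block
   onto itself.  Restriction to the blocks is then an isomorphism onto the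
   product, whose inverse glues block automorphisms along the shared
   terminals. *)

From mathcomp Require Import all_boot all_fingroup.
From mathcomp Require Import zify.
Set Implicit Arguments. Unset Strict Implicit. Unset Printing Implicit Defensive.

Section SeriesParallel.
Variable V : finType.
Implicit Types (H : graph V) (A : {set V}) (f : {perm V}) (Gs : nat -> graph V)
  (ss : nat -> V).

Definition adj_avoid H A : rel V :=
  fun x y => [&& [set x; y] \in edges H, x \notin A & y \notin A].

Lemma adj_avoid_sym H A : symmetric (adj_avoid H A).
Proof. by move=> x y; rewrite /adj_avoid setUC; case: (x \in A); case: (y \in A). Qed.

Lemma connect_avoid_sym H A : connect_sym (adj_avoid H A).
Proof. exact/sym_connect_sym/adj_avoid_sym. Qed.

Lemma connect_avoid_sub H H' A A' x y : {subset edges H <= edges H'} ->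
  {subset A' <= A} -> connect (adj_avoid H A) x y -> connect (adj_avoid H' A') x y.
Proof.
move=> sE sA; apply: connect_sub => u v /and3P[e uA vA]; apply: connect1.
by rewrite /adj_avoid sE // (contra (sA u)) // (contra (sA v)).
Qed.

Lemma connect_avoid_neq H u x y :
  connect (adj_avoid H [set u]) x y -> u != x -> u != y.
Proof.
case/connectP=> p; elim: p x => [|z p IH] x /=; first by move=> _ ->.
move=> /andP[/and3P[_ _ zu] pz] ey _; apply: IH pz ey _.
by rewrite inE eq_sym in zu.
Qed.

Lemma connect_avoid_out H u :
  (forall e, e \in edges H -> e \subset verts H) -> u \notin verts H ->
  connect (adj_avoid H [set u]) =2 connect (adj_avoid H set0).
Proof.
move=> eH uH; apply: eq_connect => x y; rewrite /adj_avoid !inE.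
case e: ([set x; y] \in edges H) => //=; have /subsetP sv := eH _ e.
by rewrite !(memPn uH) // sv // !inE eqxx ?orbT.
Qed.

Lemma connect_avoid_aut H A f x y : is_aut H f -> connect (adj_avoid H A) x y ->
  connect (adj_avoid H (f @: A)) (f x) (f y).
Proof.
move=> /andP[_ /forallP af] /connectP[p pp ->]; elim: p x pp => [|z p IH] x /=.
  by rewrite connect0.
case/andP=> /and3P[e xA zA] pz; apply: connect_trans (IH _ pz); apply: connect1.
rewrite /adj_avoid !mem_imset ?xA ?zA ?andbT; try exact: perm_inj.
by have := af [set x; z]; rewrite imsetU1 imset_set1 e => /eqP ->.
Qed.

Lemma is_autV H f : is_aut H f -> is_aut H f^-1%g.
Proof.
case/andP=> pf /forallP af; rewrite /is_aut perm_onV //=; apply/forallP=> e.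
have := af (f^-1%g @: e); rewrite -imset_comp (eq_imset _ (permKV f)) imset_id.
by rewrite eq_sym.
Qed.

Lemma is_aut_edge H f e : is_aut H f -> e \in edges H -> f @: e \in edges H.
Proof. by case/andP=> _ /forallP/(_ e)/eqP ->. Qed.

(* Since [e |-> f @: e] is injective, mapping the finitely many edges into
   edges already makes it a bijection of the edge set. *)
Lemma is_aut_stable H f : perm_on (verts H) f ->
  (forall e, e \in edges H -> f @: e \in edges H) -> is_aut H f.
Proof.
move=> pf fE; rewrite /is_aut pf; apply/forallP => e /=.
pose fS (e : {set V}) := f @: e.
have injE : injective fS by apply/imset_inj/perm_inj.
have fSE : fS @: edges H = edges H.
  apply/eqP; rewrite eqEcard card_imset //= leqnn andbT.
  by apply/subsetP => _ /imsetP[e' e'E ->]; apply: fE.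
by rewrite -{1}fSE (mem_imset _ _ injE).
Qed.

Lemma Aut_orP H u v f :
  reflect [/\ is_aut H f, f u = u & f v = v] (f \in Aut_or H u v).
Proof.
rewrite inE; apply: (iffP idP) => [/andP[/andP[? /eqP ?] /eqP ?] //|[-> -> ->]].
by rewrite !eqxx.
Qed.

Lemma Aut_orV H u v f : f \in Aut_or H u v -> f^-1%g \in Aut_or H u v.
Proof.
case/Aut_orP=> af fu fv; apply/Aut_orP; split; first exact: is_autV.
  by rewrite -{1}fu permK.
by rewrite -{1}fv permK.
Qed.

Lemma verts_big_unionP k Gs x :
  reflect (exists2 i, i < k & x \in verts (Gs i)) (x \in verts (big_union k Gs)).
Proof.
apply: (iffP bigcupP) => [[i _ h]|[i lt h]]; first by exists i.
by exists (Ordinal lt).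
Qed.

Lemma edges_big_unionP k Gs e :
  reflect (exists2 i, i < k & e \in edges (Gs i)) (e \in edges (big_union k Gs)).
Proof.
apply: (iffP bigcupP) => [[i _ h]|[i lt h]]; first by exists i.
by exists (Ordinal lt).
Qed.

Lemma verts_big_union_sub k Gs i :
  i < k -> {subset verts (Gs i) <= verts (big_union k Gs)}.
Proof. by move=> lt x h; apply/verts_big_unionP; exists i. Qed.

Lemma edges_big_union_sub k Gs i :
  i < k -> {subset edges (Gs i) <= edges (big_union k Gs)}.
Proof. by move=> lt e h; apply/edges_big_unionP; exists i. Qed.

Lemma osp_terminals H a b : osp H a b -> [/\ a \in verts H, b \in verts H & a != b].
Proof.
elim=> {H a b}.
- by move=> s t st; rewrite /verts /single_edge /= !inE !eqxx orbT.
- move=> G s t k Gs ss st _ IH [k2 [s0 tk] _ _ ->]; subst s t; split => //.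
    by apply: verts_big_union_sub (_ : 0 < k) _ _; [lia | case: (IH 0 _) => //; lia].
  apply: verts_big_union_sub (_ : k.-1 < k) _ _; first lia.
  by case: (IH k.-1 _); rewrite ?prednK //; lia.
- move=> G s t k Gs st _ IH [k2 _ ->]; split => //;
    by apply: verts_big_union_sub (_ : 0 < k) _ _; [lia | case: (IH 0 _) => //; lia].
Qed.

Lemma osp_edges H a b : osp H a b ->
  forall e, e \in edges H -> e \subset verts H /\ #|e| = 2.
Proof.
elim=> {H a b}.
- move=> s t st e; rewrite /edges /verts /single_edge /= inE => /eqP ->.
  by rewrite subxx cards2 st.
- move=> G s t k Gs ss st _ IH [_ _ _ _ ->] e /edges_big_unionP[i lt ei].
  have [/subsetP sub c2] := IH i lt e ei; split => //.
  by apply/subsetP => x /sub; apply: verts_big_union_sub.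
- move=> G s t k Gs st _ IH [_ _ ->] e /edges_big_unionP[i lt ei].
  have [/subsetP sub c2] := IH i lt e ei; split => //.
  by apply/subsetP => x /sub; apply: verts_big_union_sub.
Qed.

Lemma osp_edges_sub H a b : osp H a b ->
  forall e, e \in edges H -> e \subset verts H.
Proof. by move=> o e /(osp_edges o) []. Qed.

Lemma connect_avoid_chain k Gs ss A n1 n2 : n1 <= n2 <= k ->
  (forall j, n1 <= j < n2 -> connect (adj_avoid (Gs j) A) (ss j) (ss j.+1)) ->
  connect (adj_avoid (big_union k Gs) A) (ss n1) (ss n2).
Proof.
elim: n2 => [|n IH] h12 hj; first by have -> : n1 = 0 by lia.
have [->|ne] := eqVneq n1 n.+1; first exact: connect0.
apply: connect_trans (IH _ _) _; first by lia.
  by move=> j hjj; apply: hj; lia.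
by apply: connect_avoid_sub (hj n _) => //; [apply: edges_big_union_sub; lia | lia].
Qed.

Lemma osp_connected H a b : osp H a b ->
  forall x, x \in verts H -> connect (adj_avoid H set0) x a.
Proof.
elim=> {H a b}.
- move=> s t st x; rewrite /verts /single_edge /= !inE => /orP[]/eqP ->.
    exact: connect0.
  by apply: connect1; rewrite /adj_avoid !inE setUC eqxx.
- move=> G s t k Gs ss st o IH [k2 [<- _] _ _ ->] x /verts_big_unionP[m lt xm].
  have cm := connect_avoid_sub (edges_big_union_sub lt) (fun _ => id) (IH m lt x xm).
  apply: connect_trans cm _.
  rewrite connect_avoid_sym; apply: connect_avoid_chain; first by lia.
  move=> j hj; rewrite connect_avoid_sym; apply: IH; first by lia.
  by case: (osp_terminals (o j _)) => //; lia.
- move=> G s t k Gs st _ IH [k2 _ ->] x /verts_big_unionP[m lt xm].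
  by apply: connect_avoid_sub (IH m lt x xm) => //; apply: edges_big_union_sub.
Qed.

Lemma osp_connect_out H a b u : osp H a b -> u \notin verts H ->
  connect (adj_avoid H [set u]) a b.
Proof.
move=> o uH; rewrite (connect_avoid_out (osp_edges_sub o) uH) connect_avoid_sym.
by apply: (osp_connected o); case: (osp_terminals o).
Qed.

Definition separates H a u w :=
  [&& u != w, u != a & ~~ connect (adj_avoid H [set u]) a w].

Definition depth H a w := #|[set u | separates H a u w]|.

Lemma separates_aut H a f u w : is_aut H f -> f a = a ->
  separates H a (f u) (f w) = separates H a u w.
Proof.
suff sep_aut g u' w' : is_aut H g -> g a = a ->
    separates H a u' w' -> separates H a (g u') (g w').
  move=> af fa; apply/idP/idP; last exact: sep_aut.
  have fVa : f^-1%g a = a by rewrite -{1}fa permK.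
  by move/(sep_aut _ _ _ (is_autV af) fVa); rewrite !permK.
move=> ag ga /and3P[uw ua nc].
rewrite /separates !(inj_eq perm_inj) uw -{1}ga (inj_eq perm_inj) ua /=.
apply: contra nc => /(connect_avoid_aut (is_autV ag)).
by rewrite imset_set1 !permK -{1}ga permK.
Qed.

Lemma depth_aut H a f w : is_aut H f -> f a = a -> depth H a (f w) = depth H a w.
Proof.
move=> af fa; rewrite /depth -[RHS](card_imset _ (@perm_inj _ f)).
apply: eq_card => u; rewrite -[u](permKV f) (mem_imset _ _ (@perm_inj _ f)) !inE.
exact: separates_aut.
Qed.

Lemma depth_root H a : depth H a a = 0.
Proof. by apply: eq_card0 => u; rewrite !inE /separates connect0 /= !andbF. Qed.

Definition terminals_reachable H a b := forall x u, x \in verts H -> u != x ->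
  connect (adj_avoid H [set u]) x a || connect (adj_avoid H [set u]) x b.

Definition terminals_inseparable H a b := forall u, u != a -> u != b ->
  connect (adj_avoid H [set u]) a b.

Section Serial.
Variables (G : graph V) (s t : V) (k : nat) (Gs : nat -> graph V) (ss : nat -> V).
Hypothesis osps : forall i, i < k -> osp (Gs i) (ss i) (ss i.+1).
Hypothesis sc : serial_cond G s t k Gs ss.

Local Notation S i := (verts (Gs i)).

Lemma serial_k : 1 < k. Proof. by case: sc. Qed.
Lemma serial_s : ss 0 = s. Proof. by case: sc => _ []. Qed.
Lemma serial_t : ss k = t. Proof. by case: sc => _ []. Qed.

Lemma serial_meet i j x : i < j -> j < k -> x \in S i -> x \in S j ->
  j = i.+1 /\ x = ss j.
Proof.
case: sc => _ _ adjacent apart _ ij jk xi xj.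
have [e|ne] := eqVneq j i.+1.
  subst j; split => //.
  by have /setP/(_ x) := adjacent i jk; rewrite !inE xi xj => /esym/eqP.
by have /setP/(_ x) := apart i j jk ltac:(lia); rewrite !inE xi xj.
Qed.

Lemma serial_meet_at j i m x : i < j <= m -> m < k -> x \in S i -> x \in S m ->
  x = ss j.
Proof.
move=> hj mk xi xm; have im : i < m by lia.
by have [m1 ->] := serial_meet im mk xi xm; congr ss; lia.
Qed.

Lemma ss_block j : j < k -> ss j \in S j.
Proof. by move=> jk; case: (osp_terminals (osps jk)). Qed.

Lemma ss_block_succ j : j < k -> ss j.+1 \in S j.
Proof. by move=> jk; case: (osp_terminals (osps jk)). Qed.

Lemma ss_neq j : j < k -> ss j != ss j.+1.
Proof. by move=> jk; case: (osp_terminals (osps jk)). Qed.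

Lemma ss_block_pred j : 0 < j <= k -> ss j \in S j.-1.
Proof.
by move=> hj; have := @ss_block_succ j.-1; rewrite prednK; [apply; lia | lia].
Qed.

Lemma ss_inj i j : ss i = ss j -> i <= k -> j <= k -> i = j.
Proof.
wlog lt_ij : i j / i < j.
  move=> W e ik jk; case: (ltngtP i j) => [h|h|//]; first exact: W.
  by apply/esym/W.
move=> e _ jk; have ik : i < k by lia.
have j0 : 0 < j by lia.
suff : ss i = ss i.+1 by move/eqP; rewrite (negPf (ss_neq ik)).
have sj : ss i \in S j.-1 by rewrite e ss_block_pred //; lia.
have [ei | ne] := eqVneq i j.-1; first by rewrite {1}e ei prednK.
have ij1 : i < j.-1 by lia.
have j1k : j.-1 < k by lia.
by have [-> ->] := serial_meet ij1 j1k (ss_block ik) sj.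
Qed.

Lemma serial_verts x : x \in verts G -> exists2 j, j < k & x \in S j.
Proof. by case: sc => _ _ _ _ -> /verts_big_unionP. Qed.

Lemma serial_verts_sub i : i < k -> {subset S i <= verts G}.
Proof. by case: sc => _ _ _ _ -> ik; apply: verts_big_union_sub. Qed.

Lemma serial_edges e : e \in edges G -> exists2 j, j < k & e \in edges (Gs j).
Proof. by case: sc => _ _ _ _ -> /edges_big_unionP. Qed.

Lemma serial_edges_sub i : i < k -> {subset edges (Gs i) <= edges G}.
Proof. by case: sc => _ _ _ _ -> ik; apply: edges_big_union_sub. Qed.

Lemma serial_verts_inner x : x \in verts G -> x != s ->
  exists2 m, m < k & (x \in S m) && (x != ss m).
Proof.
move=> /serial_verts[m mk xm] xs; have [xe|xn] := eqVneq x (ss m); last first.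
  by exists m; rewrite ?xm.
have m0 : 0 < m by case: m xe {mk xm} => // xe; rewrite xe serial_s eqxx in xs.
exists m.-1; first lia.
rewrite xe ss_block_pred /=; last lia.
by rewrite -{1}(prednK m0) eq_sym ss_neq //; lia.
Qed.

(* A shared vertex of two blocks is a single terminal, but edges have two ends. *)
Lemma serial_edge_block e i : i < k -> e \in edges G -> e \subset S i ->
  e \in edges (Gs i).
Proof.
move=> ik /serial_edges[j jk ej] eS; have [<-//|ne] := eqVneq j i.
have [sj c2] := osp_edges (osps jk) ej.
suff : #|e| <= 1 by rewrite c2.
have : e \subset [set ss (maxn i j)].
  apply/subsetP => x xe; rewrite inE; have xi := subsetP eS x xe.
  have xj := subsetP sj x xe.
  case: (ltngtP i j) => lt; last by rewrite lt eqxx in ne.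
    by have [_ ->] := serial_meet lt jk xi xj.
  by have [_ ->] := serial_meet lt ik xj xi.
by move/subset_leq_card; rewrite cards1.
Qed.

Lemma serial_lift j A x y : j < k ->
  connect (adj_avoid (Gs j) A) x y -> connect (adj_avoid G A) x y.
Proof. by move=> jk; apply: connect_avoid_sub => //; apply: serial_edges_sub. Qed.

Lemma serial_chain A n1 n2 : n1 <= n2 <= k ->
  (forall j, n1 <= j < n2 -> connect (adj_avoid (Gs j) A) (ss j) (ss j.+1)) ->
  connect (adj_avoid G A) (ss n1) (ss n2).
Proof. by case: sc => _ _ _ _ ->; apply: connect_avoid_chain. Qed.

Lemma serial_connect_s m u : m <= k -> (forall j, j < m -> u \notin S j) ->
  connect (adj_avoid G [set u]) (ss m) s.
Proof.
move=> mk h; rewrite -serial_s connect_avoid_sym; apply: serial_chain; first lia.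
by move=> j hj; apply: osp_connect_out; [apply: osps | apply: h]; lia.
Qed.

Lemma serial_connect_t m u : m <= k -> (forall j, m <= j < k -> u \notin S j) ->
  connect (adj_avoid G [set u]) (ss m) t.
Proof.
move=> mk h; rewrite -serial_t; apply: serial_chain; first lia.
by move=> j hj; apply: osp_connect_out; [apply: osps | apply: h]; lia.
Qed.

Hypothesis blocks_reachable :
  forall i, i < k -> terminals_reachable (Gs i) (ss i) (ss i.+1).

Lemma serial_terminals_reachable : terminals_reachable G s t.
Proof.
move=> x u /serial_verts[m mk xm] ux.
have to_s : connect (adj_avoid (Gs m) [set u]) x (ss m) ->
    (forall j, j < m -> u \notin S j) -> connect (adj_avoid G [set u]) x s.
  by move=> c h; apply: connect_trans (serial_lift mk c) (serial_connect_s (ltnW mk) h).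
have to_t : connect (adj_avoid (Gs m) [set u]) x (ss m.+1) ->
    (forall j, m.+1 <= j < k -> u \notin S j) -> connect (adj_avoid G [set u]) x t.
  by move=> c h; apply: connect_trans (serial_lift mk c) (serial_connect_t mk h).
have [um|um] := boolP (u \in S m).
  case/orP: (blocks_reachable mk xm ux) => c; apply/orP;
    [left; apply: (to_s c) | right; apply: (to_t c)].
    move=> j jm; apply: contra (connect_avoid_neq c ux) => uj.
    by have [_ ->] := serial_meet jm mk uj um.
  move=> j /andP[mj jk]; apply: contra (connect_avoid_neq c ux) => uj.
  by have [-> ->] := serial_meet mj jk um uj.
have cm : connect (adj_avoid (Gs m) [set u]) x (ss m).
  rewrite (connect_avoid_out (osp_edges_sub (osps mk)) um).
  exact: (osp_connected (osps mk)).
(* [u] cannot lie in blocks on both sides of block [m]. *)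
have [left_free|/forallPn[j /negPn uj]] := boolP [forall j : 'I_m, u \notin S j].
  by rewrite (to_s cm) // => j jm; apply: (forallP left_free (Ordinal jm)).
apply/orP; right; apply: to_t (connect_trans cm (osp_connect_out (osps mk) um)) _.
move=> j' /andP[mj' j'k]; apply/negP => uj'.
by have [] := serial_meet (_ : j < j') j'k uj uj'; have := ltn_ord j; lia.
Qed.

Hypothesis blocks_inseparable :
  forall i, i < k -> terminals_inseparable (Gs i) (ss i) (ss i.+1).

Lemma connect_s_ss n u : n <= k -> (forall j, j <= n -> u != ss j) ->
  connect (adj_avoid G [set u]) s (ss n).
Proof.
move=> nk h; rewrite -serial_s; apply: serial_chain; first lia.
by move=> j hj; apply: blocks_inseparable; [lia | apply: h; lia | apply: h; lia].
Qed.

Lemma ss_separates j m w : 0 < j <= m -> m < k -> w \in S m -> w != ss j ->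
  separates G s (ss j) w.
Proof.
move=> hj mk wm wj; have j0 : 0 < j by lia.
have s_neq : ss 0 != ss j by apply/eqP => /ss_inj; lia.
rewrite /separates -serial_s !(eq_sym (ss j)) wj s_neq /=.
pose X := [set x | [exists i : 'I_j, x \in S i] && (x != ss j)].
have clX : closed (adj_avoid G [set ss j]) X.
  apply: (intro_closed (connect_avoid_sym G _)) => x y /and3P[e _ yj].
  rewrite !inE => /andP[/existsP[i xi] xj]; rewrite inE in yj; rewrite yj andbT.
  have [m' m'k em'] := serial_edges e.
  have [/subsetP sub _] := osp_edges (osps m'k) em'.
  have [lt|ge] := ltnP m' j.
    by apply/existsP; exists (Ordinal lt); apply: sub; rewrite !inE eqxx orbT.
  have xm' : x \in S m' by apply: sub; rewrite !inE eqxx.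
  have ijm : i < j <= m' by rewrite ltn_ord.
  by rewrite (serial_meet_at ijm m'k xi xm') eqxx in xj.
apply/negP => /(closed_connect clX); rewrite !inE wj s_neq !andbT.
have -> : [exists i : 'I_j, ss 0 \in S i].
  by apply/existsP; exists (Ordinal j0); apply: ss_block; lia.
move=> /esym/existsP[i wi]; have ijm : i < j <= m by rewrite ltn_ord; lia.
by rewrite (serial_meet_at ijm mk wi wm) eqxx in wj.
Qed.

Lemma separates_block u w m : m < k -> w \in S m -> separates G s u w ->
  exists2 j, 0 < j <= m & u = ss j.
Proof.
move=> mk wm /and3P[uw us nc].
have [/existsP[j /andP[j0 /eqP ->]]|/existsPn no_ss] :=
  boolP [exists j : 'I_m.+1, (0 < j) && (u == ss j)].
  by exists j; rewrite // j0 -ltnS ltn_ord.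
have um j : j <= m -> u != ss j.
  move=> jm; have [-> | j0] := posnP j; first by rewrite serial_s.
  by have := no_ss (Ordinal (jm : j < m.+1)); rewrite /= j0.
case/negP: nc; apply: connect_trans (connect_s_ss (ltnW mk) um) _.
rewrite connect_avoid_sym; apply: (serial_lift mk).
case/orP: (blocks_reachable mk wm uw) => // c.
apply: (connect_trans c); rewrite connect_avoid_sym.
exact: blocks_inseparable mk _ (um m (leqnn m)) (connect_avoid_neq c uw).
Qed.

Lemma depth_block m x : m < k -> x \in S m -> x != ss m -> depth G s x = m.
Proof.
move=> mk xm xnm.
have sepE : [set u | separates G s u x] =i [seq ss j | j <- iota 1 m].
  move=> u; rewrite inE; apply/idP/mapP => [/(separates_block mk xm)[j hj ->]|[j]].
    by exists j; rewrite // mem_iota; lia.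
  rewrite mem_iota => hj ->; apply: (ss_separates _ mk xm); first lia.
  have [-> // | ltjm] := eqVneq j m.
  apply: contra_neq xnm => xj; have jm : j < m <= m by lia.
  by apply: (serial_meet_at jm mk _ xm); rewrite xj ss_block; lia.
rewrite /depth (eq_card sepE) (card_uniqP _) ?size_map ?size_iota //.
rewrite map_inj_in_uniq ?iota_uniq // => i j.
by rewrite !mem_iota => hi hj /ss_inj; lia.
Qed.

Lemma depth_ss j : 0 < j <= k -> depth G s (ss j) = j.-1.
Proof.
move=> hj; have j0 : 0 < j by lia.
apply: depth_block; [lia | exact: ss_block_pred |].
by rewrite eq_sym -{2}(prednK j0) ss_neq //; lia.
Qed.

Lemma aut_fix_ss f j : f \in Aut_or G s t -> j <= k -> f (ss j) = ss j.
Proof.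
move=> /Aut_orP[af fs ft] jk; have k2 := serial_k.
have [-> | j0] := posnP j; first by rewrite serial_s.
have [-> | jnk] := eqVneq j k; first by rewrite serial_t.
have k1 : k.-1 < k by lia.
have tk : t \in S k.-1 by rewrite -serial_t ss_block_pred //; lia.
have sep : separates G s (f (ss j)) t.
  rewrite -ft (separates_aut _ _ af fs); apply: ss_separates k1 tk _; first lia.
  by rewrite -serial_t; apply/eqP => /ss_inj; lia.
have [j' hj' fj] := separates_block k1 tk sep.
have dj : depth G s (ss j) = j.-1 by apply: depth_ss; lia.
have dj' : depth G s (ss j') = j'.-1 by apply: depth_ss; lia.
have := depth_aut (ss j) af fs; rewrite fj dj dj' => e.
by congr ss; lia.
Qed.

(* Blocks are recognised by depth, which automorphisms fixing s preserve. *)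
Lemma aut_block f i x : f \in Aut_or G s t -> i < k -> x \in S i -> f x \in S i.
Proof.
move=> fA ik xi; have /Aut_orP[af fs _] := fA.
have [-> | xn] := eqVneq x (ss i); first by rewrite aut_fix_ss ?ss_block // ltnW.
have dx := depth_block ik xi xn.
have xs : x != s.
  apply: contra_neq xn => xs; move: dx; rewrite xs depth_root => i0.
  by rewrite -i0 serial_s.
have fxG : f x \in verts G.
  by case/andP: af => pf _; rewrite (perm_closed _ pf) (serial_verts_sub ik).
have fxs : f x != s by rewrite -{1}fs (inj_eq perm_inj).
have [m mk /andP[fxm fxn]] := serial_verts_inner fxG fxs.
by move: (depth_block mk fxm fxn); rewrite (depth_aut _ af fs) dx => ->.
Qed.

Lemma aut_astabs f i : f \in Aut_or G s t -> i < k -> f \in ('N(S i | 'P))%g.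
Proof.
move=> fA ik; apply/astabsP => x /=; rewrite apermE.
apply/idP/idP => [|/(aut_block fA ik)//].
by move/(aut_block (Aut_orV fA) ik); rewrite permK.
Qed.

Lemma restr_perm_block f (i : 'I_k) : f \in Aut_or G s t ->
  restr_perm (S i) f \in Aut_or (Gs i) (ss i) (ss i.+1).
Proof.
move=> fA; have /Aut_orP[af _ _] := fA; have ik := ltn_ord i.
have rE : {in S i, restr_perm (S i) f =1 f}.
  by move=> x; apply: restr_permE (aut_astabs fA ik).
apply/Aut_orP; split.
- apply: is_aut_stable (restr_perm_on _ _) _ => e ei.
  have eS := osp_edges_sub (osps ik) ei.
  rewrite (eq_in_imset (sub_in1 (subsetP eS) rE)).
  apply: (serial_edge_block ik (is_aut_edge af (serial_edges_sub ik ei))).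
  by apply/subsetP => _ /imsetP[x xe ->]; exact: aut_block fA ik (subsetP eS x xe).
- by rewrite rE ?ss_block ?aut_fix_ss // ltnW.
- by rewrite rE ?ss_block_succ ?aut_fix_ss.
Qed.

Definition restr_blocks (f : {perm V}) : {ffun 'I_k -> {perm V}} :=
  [ffun i : 'I_k => restr_perm (S i) f].

Definition glue (h : {ffun 'I_k -> {perm V}}) (x : V) : V :=
  if [pick i : 'I_k | x \in S i] is Some i then h i x else x.

Definition block_auts (h : {ffun 'I_k -> {perm V}}) :=
  forall i : 'I_k, h i \in Aut_or (Gs i) (ss i) (ss i.+1).

(* A vertex shared by two blocks is a terminal, fixed by both automorphisms. *)
Lemma glueE h : block_auts h -> forall i : 'I_k, {in S i, glue h =1 h i}.
Proof.
move=> hA i x xi; rewrite /glue; case: pickP => [j xj|/(_ i)]; last by rewrite xi.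
have fix_shared (a b : 'I_k) : a < b -> x \in S a -> x \in S b -> h a x = h b x.
  move=> ab xa xb; have [e1 ->] := serial_meet ab (ltn_ord b) xa xb.
  have /Aut_orP[_ -> _] := hA b; have /Aut_orP[_ _ ha] := hA a.
  by rewrite e1 ha.
case: (ltngtP i j) => [ij|ji|/val_inj -> //].
  by rewrite (fix_shared _ _ ij xi xj).
by rewrite (fix_shared _ _ ji xj xi).
Qed.

Lemma glue_out h x : x \notin verts G -> glue h x = x.
Proof.
move=> xG; rewrite /glue; case: pickP => [j xj|//].
by rewrite (serial_verts_sub (ltn_ord j) xj) in xG.
Qed.

Lemma glueK h : block_auts h -> cancel (glue h) (glue [ffun i => (h i)^-1%g]).
Proof.
move=> hA x; have hVA : block_auts [ffun i => (h i)^-1%g].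
  by move=> i; rewrite ffunE Aut_orV.
have [xG|xG] := boolP (x \in verts G); last by rewrite !glue_out.
have [m mk xm] := serial_verts xG; pose i := Ordinal mk.
have /Aut_orP[/andP[pf _] _ _] := hA i.
rewrite (glueE hA (i := i)) // (glueE hVA (i := i)) ?ffunE ?permK //.
by rewrite (perm_closed _ pf).
Qed.

Section GluePerm.
Variable h : {ffun 'I_k -> {perm V}}.
Hypothesis hA : block_auts h.

Definition glue_perm : {perm V} := perm (can_inj (glueK hA)).

Lemma glue_perm_Aut : glue_perm \in Aut_or G s t.
Proof.
have gE : glue_perm =1 glue h by apply: permE.
have k2 := serial_k.
have k0 : 0 < k by lia.
have k1 : k.-1 < k by lia.
apply/Aut_orP; split.
- apply: is_aut_stable.
    apply/subsetP => x; rewrite inE gE; apply: contraR => xG.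
    by rewrite glue_out ?eqxx.
  move=> e /serial_edges[j jk ej]; have eS := osp_edges_sub (osps jk) ej.
  rewrite (eq_imset _ gE).
  rewrite (eq_in_imset (sub_in1 (subsetP eS) (glueE hA (i := Ordinal jk)))).
  have /Aut_orP[aj _ _] := hA (Ordinal jk).
  exact/(serial_edges_sub jk)/(is_aut_edge aj).
- have /Aut_orP[_ h0 _] := hA (Ordinal k0).
  by rewrite gE -serial_s (glueE hA (i := Ordinal k0)) ?ss_block.
- have /Aut_orP[_ _ hk] := hA (Ordinal k1).
  rewrite gE (glueE hA (i := Ordinal k1)) /=; last first.
    by rewrite -serial_t ss_block_pred //; lia.
  by move: hk; rewrite /= prednK // serial_t.
Qed.

Lemma restr_blocks_glue : restr_blocks glue_perm = h.
Proof.
apply/ffunP => i; rewrite ffunE; apply/permP => x.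
have /Aut_orP[/andP[pf _] _ _] := hA i.
have [xi|xi] := boolP (x \in S i); last first.
  by rewrite (out_perm (restr_perm_on _ _)) // (out_perm pf).
by rewrite restr_permE ?(aut_astabs glue_perm_Aut) // permE (glueE hA (i := i)).
Qed.

End GluePerm.

Lemma serial_Aut_or_iso :
  iso_to_prod (Aut_or G s t) (fun i : 'I_k => Aut_or (Gs i) (ss i) (ss i.+1)).
Proof.
exists restr_blocks; split.
- move=> f g fA gA; apply/ffunP => i; rewrite !ffunE.
  exact: morphM (aut_astabs fA (ltn_ord i)) (aut_astabs gA (ltn_ord i)).
- move=> f g fA gA fg; apply/permP => x.
  have [xG|xG] := boolP (x \in verts G); last first.
    have /Aut_orP[/andP[pf _] _ _] := fA; have /Aut_orP[/andP[pg _] _ _] := gA.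
    by rewrite (out_perm pf) ?(out_perm pg).
  have [m mk xm] := serial_verts xG.
  have := congr1 (fun h : {ffun 'I_k -> {perm V}} => h (Ordinal mk) x) fg.
  by rewrite /= !ffunE !restr_permE ?(aut_astabs fA) ?(aut_astabs gA).
- by move=> f fA i; rewrite ffunE restr_perm_block.
- move=> h hA; exists (glue_perm hA); first exact: glue_perm_Aut.
  exact: restr_blocks_glue.
Qed.

End Serial.

Lemma osp_terminals_reachable H a b : osp H a b -> terminals_reachable H a b.
Proof.
elim=> {H a b}.
- move=> s t st x u; rewrite /verts /single_edge /= !inE => /orP[]/eqP -> _.
    by rewrite connect0.
  by rewrite connect0 orbT.
- by move=> G s t k Gs ss st o IH sc; apply: (serial_terminals_reachable o sc IH).
- move=> G s t k Gs st _ IH [k2 _ ->] x u /verts_big_unionP[m mk xm] ux.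
  by case/orP: (IH m mk x u xm ux) => c; apply/orP; [left|right];
    apply: connect_avoid_sub (edges_big_union_sub mk) _ c.
Qed.

(* In a parallel superedge, an inner vertex misses some branch, which still
   joins the terminals. *)
Lemma nonserial_terminals_inseparable H a b : osp H a b -> ~ is_serial H a b ->
  terminals_inseparable H a b.
Proof.
case=> {H a b}.
- move=> s t st _ u us ut; apply: connect1.
  by rewrite /adj_avoid !inE eqxx (eq_sym s) (eq_sym t) us ut.
- by move=> G s t k Gs ss st o sc []; split => //; exists k, Gs, ss.
move=> G s t k Gs st o [k2 meet ->] _ u us ut.
have [l [lk ul]] : exists l, l < k /\ u \notin verts (Gs l).
  have [u0|u0] := boolP (u \in verts (Gs 0)); last by exists 0; split => //; lia.
  exists 1; split => //; apply/negP => u1.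
  have /setP/(_ u) := meet 0 1 ltac:(lia) k2 ltac:(lia).
  by rewrite !inE u0 u1 (negPf us) (negPf ut).
apply: connect_avoid_sub (osp_connect_out (o l lk) ul) => //.
exact: edges_big_union_sub.
Qed.

End SeriesParallel.

Unset Implicit Arguments.
Theorem theorem5p3 (V : finType) (G : graph V) (s t : V) (k : nat)
    (Gs : nat -> graph V) (ss : nat -> V) :
  s != t ->
  (forall i, i < k -> osp (Gs i) (ss i) (ss i.+1)) ->
  serial_cond G s t k Gs ss ->
  (forall i, i < k -> ~ is_serial (Gs i) (ss i) (ss i.+1)) ->
  iso_to_prod (Aut_or G s t) (fun i : 'I_k => Aut_or (Gs i) (ss i) (ss i.+1)).
Proof.
move=> _ osps sc nonserial; apply: (serial_Aut_or_iso osps sc) => i ik.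
  exact: osp_terminals_reachable (osps i ik).
exact: nonserial_terminals_inseparable (osps i ik) (nonserial i ik).
Qed.
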